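(* Let $n\ge 2$ and let $p=(p_1,\dots,p_n)$ be a vector with all $p_i>0$. For $q\in \mathrm{Sim}_n(1)$ define $$OD(q,p)=\sum_{1\le i\le n}\Big((1-q_i)\log(1-q_i) - q_i\log\frac{q_i}{p_i}\Big).$$ (1) For an index $j$, $\max_{q\in\mathrm{Sim}_n(1)} OD(q,p)=\log(p_j)$ if and only if $p_j\ge\sum_{i\ne j}p_i$ (such $j$ is called dominant). If $n\ge 3$ there is at most one dominant index. If there is no dominant index, the maximum of $OD(\cdot,p)$ over $\mathrm{Sim}_n(1)$ is attained in the interior of the simplex. (2) If $p_i=c>0$ for all $i$, then $$\max_{q\in\mathrm{Sim}_n(1)} OD(q,p)=OD\!\left(\tfrac{e}{n},p\right)=(n-1)\log(1-n^{-1})+\log n+\log c.$$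
   Context: $\mathrm{Sim}_n(1)=\{(q_1,\dots,q_n): q_i\ge 0,\ \sum_i q_i=1\}$; $e=(1,\dots,1)$, so $e/n$ is the uniform vector. Conventions: $0\log 0=0$ (i.e. $0^0=1$). *)

From HB Require Import structures.
From mathcomp Require Import all_boot all_order all_algebra.
From mathcomp Require Import all_classical all_reals all_analysis.
Set Implicit Arguments. Unset Strict Implicit. Unset Printing Implicit Defensive.
Import Order.TTheory GRing.Theory Num.Theory.
Local Open Scope ring_scope.

Section OD.
Variables (R : realType) (n : nat).

Definition Sim (q : 'I_n -> R) : Prop :=
  (forall i, 0 <= q i) /\ \sum_(i < n) q i = 1.

Definition xlnx (x : R) : R := if x == 0 then 0 else x * ln x.

Definition xlnxdiv (x y : R) : R := if x == 0 then 0 else x * ln (x / y).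

Definition OD (q p : 'I_n -> R) : R :=
  \sum_(i < n) (xlnx (1 - q i) - xlnxdiv (q i) (p i)).

Definition is_maximizer (p q : 'I_n -> R) : Prop :=
  Sim q /\ forall q', Sim q' -> OD q' p <= OD q p.

Definition is_max_value (p : 'I_n -> R) (M : R) : Prop :=
  (exists q, Sim q /\ OD q p = M) /\ (forall q, Sim q -> OD q p <= M).

Definition dominant (p : 'I_n -> R) (j : 'I_n) : Prop :=
  \sum_(i < n | i != j) p i <= p j.

End OD.

From HB Require Import structures.
From mathcomp Require Import all_boot all_order all_algebra.
From mathcomp Require Import all_classical all_reals all_analysis.
From mathcomp Require Import lra ring.
Import Order.TTheory GRing.Theory Num.Theory.
Local Open Scope ring_scope.

(* OD(q, p) is the sum of the terms od_term p_i q_i; let P = sum_{i<>j} p_i.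
   If p_j >= P, the log-sum inequality and the convexity of y ln y bound OD(., p)
   by ln p_j, its value at the vertex e_j.  If p_j < P, the point
   (1 - t) e_j + t p_{-j} / P has OD >= ln p_j + t (ln P - ln p_j - t) > ln p_j
   for small t, so no vertex is a maximizer.  A maximizer exists by compactness.
   Since od_term has slope +oo at 0, mass can profitably be moved onto a null
   coordinate, so a maximizer that is not a vertex lies in the interior, where
   the first-order conditions equalise ln p_i - 2 - ln (q_i (1 - q_i)); for
   constant p and n >= 3 this forces q = e / n, and for n = 2 every index is
   dominant. *)

Section LnInequalities.
Context {R : realType}.
Implicit Types x y b : R.

Lemma ln_le_subr1 x : 0 < x -> ln x <= x - 1.
Proof. by move=> x0; have := @le_ln1Dx R (x - 1); rewrite addrCA subrr addr0; apply; lra. Qed.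

Lemma ln_ge_1subV x : 0 < x -> 1 - x^-1 <= ln x.
Proof.
move=> x0; have := @ln_le_subr1 x^-1; rewrite invr_gt0 lnV ?posrE // => /(_ x0).
lra.
Qed.

Lemma mul_lnE y b : 0 <= y -> 0 < b -> y * ln y = y * ln b + y * ln (y / b).
Proof.
rewrite le_eqVlt => /predU1P[<- | y0] b0; first by rewrite !mul0r addr0.
by rewrite ln_div ?posrE //; ring.
Qed.

Lemma mul_ln_div_ge y b : 0 <= y -> 0 < b -> y - b <= y * ln (y / b).
Proof.
rewrite le_eqVlt => /predU1P[<- | y0] b0; first by rewrite mul0r; lra.
have := ler_wpM2l (ltW y0) (ln_ge_1subV _ (divr_gt0 y0 b0)).
by rewrite invf_div mulrBr mulr1 mulrCA divff ?gt_eqF // mulr1.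
Qed.

Lemma mul_ln_div_le y b : 0 <= y -> 0 < b -> y * ln (y / b) <= (y - b) * y / b.
Proof.
rewrite le_eqVlt => /predU1P[<- | y0] b0; first by rewrite !(mul0r, mulr0).
have -> : (y - b) * y / b = y * (y / b - 1) by field; rewrite gt_eqF.
by rewrite ler_pM2l // ln_le_subr1 // divr_gt0.
Qed.

Lemma mul_ln_ge_tangent y b : 0 <= y -> 0 < b ->
  b * ln b + (1 + ln b) * (y - b) <= y * ln y.
Proof. by move=> y0 b0; rewrite (mul_lnE _ _ y0 b0); have := mul_ln_div_ge _ _ y0 b0; nra. Qed.

Lemma mul_ln_le_tangent_sqr y b : 0 <= y -> 0 < b ->
  y * ln y <= b * ln b + (1 + ln b) * (y - b) + (y - b) ^+ 2 / b.
Proof.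
move=> y0 b0; rewrite (mul_lnE _ _ y0 b0); have := mul_ln_div_le _ _ y0 b0.
have -> : (y - b) * y / b = (y - b) + (y - b) ^+ 2 / b by field; rewrite gt_eqF.
nra.
Qed.

(* x |-> (1 - x) ln (1 - x) is convex and vanishes at 0, so its slope from the
   origin is nondecreasing. *)
Lemma mul_ln1B_slope_le x s : 0 <= x -> x <= s -> s <= 1 ->
  s * ((1 - x) * ln (1 - x)) <= x * ((1 - s) * ln (1 - s)).
Proof.
move=> x0 xs s1; have [x1 | x1] := eqVneq x 1.
  by rewrite x1 (_ : s = 1) //; lra.
have x1' : 0 < 1 - x by rewrite subr_gt0 lt_neqAle x1; lra.
have t1 := mul_ln_ge_tangent _ _ ler01 x1'.
have t2 := @mul_ln_ge_tangent (1 - s) (1 - x) (ltac:(lra)) x1'.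
rewrite ln1 mulr0 in t1.
have := ler_wpM2l (ltac:(lra) : 0 <= s - x) t1; have := ler_wpM2l x0 t2.
nra.
Qed.

End LnInequalities.

Section Sums.
Context {R : realType}.

Lemma ler_sum_term [I : finType] [P : pred I] [F : I -> R] i :
  (forall k, P k -> 0 <= F k) -> P i -> F i <= \sum_(k | P k) F k.
Proof. by move=> F0 Pi; rewrite (bigD1 i) //= lerDl sumr_ge0 // => k /andP[/F0]. Qed.

Lemma log_sum_ineq [I : finType] [P : pred I] [a b : I -> R] :
  (forall i, P i -> 0 <= a i) -> (forall i, P i -> 0 < b i) ->
  0 < \sum_(i | P i) b i ->
  (\sum_(i | P i) a i) * ln ((\sum_(i | P i) a i) / \sum_(i | P i) b i)
    <= \sum_(i | P i) a i * ln (a i / b i).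
Proof.
move=> a0 b0; set A := \sum_(i | P i) a i; set B := \sum_(i | P i) b i => B0.
have [A0 | Apos] := eqVneq A 0.
  rewrite A0 mul0r sumr_ge0 // => i Pi.
  by rewrite (psumr_eq0P a0 A0 Pi) mul0r.
have {}Apos : 0 < A by rewrite lt_def Apos sumr_ge0.
have step i : P i -> a i * ln (A / B) + a i - b i * (A / B) <= a i * ln (a i / b i).
  move=> Pi; have bAB : 0 < b i * (A / B) by rewrite mulr_gt0 ?divr_gt0 ?b0.
  have := mul_ln_div_ge _ _ (a0 i Pi) bAB.
  have [-> | ai0] := eqVneq (a i) 0; first by rewrite !mul0r; lra.
  have aipos : 0 < a i by rewrite lt_def ai0 a0.
  rewrite (_ : a i / (b i * (A / B)) = a i / b i / (A / B)); last first.
    by field; rewrite !gt_eqF ?b0.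
  by rewrite ln_div ?posrE ?divr_gt0 ?b0 //; lra.
apply: le_trans (ler_sum _ step); rewrite !big_split /= sumrN -!mulr_suml -/A -/B.
by rewrite mulrCA divff ?gt_eqF // mulr1; lra.
Qed.

Lemma sum_mul_ln1B_le [I : finType] [P : pred I] [a : I -> R] :
  (forall i, P i -> 0 <= a i) -> \sum_(i | P i) a i <= 1 ->
  \sum_(i | P i) (1 - a i) * ln (1 - a i)
    <= (1 - \sum_(i | P i) a i) * ln (1 - \sum_(i | P i) a i).
Proof.
move=> a0; set s := \sum_(i | P i) a i => s1.
have [s0 | spos] := eqVneq s 0.
  rewrite s0 subr0 ln1 mulr0 sumr_le0 // => i Pi.
  by rewrite (psumr_eq0P a0 s0 Pi) subr0 ln1 mulr0.
have {}spos : 0 < s by rewrite lt_def spos sumr_ge0.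
rewrite -(ler_pM2l spos) mulr_sumr {2}/s mulr_suml ler_sum // => i Pi.
apply: mul_ln1B_slope_le => //; first exact: a0.
exact: ler_sum_term.
Qed.

End Sums.

Lemma exists_notin (T : finType) (s : seq T) : (size s < #|T|)%N -> exists x, x \notin s.
Proof.
move=> sT; case: (pickP (fun x => x \notin s)) => [x sx | alls]; first by exists x.
have /eq_card Ts : s =i T by move=> x; have /negbFE := alls x.
by move: sT; rewrite -Ts ltnNge card_size.
Qed.

Section ODTerms.
Context {R : realType}.
Implicit Types c x u t : R.

Definition od_term c x := (1 - x) * ln (1 - x) - x * ln (x / c).

Lemma xlnxE x : xlnx x = x * ln x.
Proof. by rewrite /xlnx; case: eqP => [->|]; rewrite ?mul0r. Qed.

Lemma xlnxdivE x c : xlnxdiv x c = x * ln (x / c).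
Proof. by rewrite /xlnxdiv; case: eqP => [->|]; rewrite ?mul0r. Qed.

Lemma ODE n (q p : 'I_n -> R) : OD q p = \sum_(i < n) od_term (p i) (q i).
Proof. by apply: eq_bigr => i _; rewrite xlnxE xlnxdivE. Qed.

Lemma od_term0 c : od_term c 0 = 0.
Proof. by rewrite /od_term subr0 ln1 !mul0r mulr0 subr0. Qed.

Lemma od_term_ge_at0 c t : 0 < c -> 0 <= t -> t <= 1 ->
  t * (ln c - 1 - ln t) <= od_term c t.
Proof.
move=> c0 t0 t1; rewrite /od_term.
have := mul_ln_div_ge _ _ (ltac:(lra) : 0 <= 1 - t) ltr01; rewrite divr1.
have := mul_lnE _ _ t0 c0; lra.
Qed.

Definition od_term_deriv c x := ln c - 2 - ln x - ln (1 - x).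

Lemma od_term_incr_ge c x u : 0 < c -> 0 < x -> x < 1 -> 0 <= x + u -> x + u <= 1 ->
  u * od_term_deriv c x - u ^+ 2 / x <= od_term c (x + u) - od_term c x.
Proof.
move=> c0 x0 x1 xu0 xu1.
have ex y : 0 <= y -> y * ln (y / c) = y * ln y - y * ln c.
  by move=> y0; rewrite (mul_lnE _ _ y0 c0); ring.
rewrite /od_term !ex //; last exact: ltW.
have t1 := @mul_ln_ge_tangent _ (1 - (x + u)) (1 - x) (ltac:(lra)) (ltac:(lra)).
have t2 := mul_ln_le_tangent_sqr _ _ xu0 x0.
rewrite (_ : x + u - x = u) in t2; last by ring.
rewrite (_ : 1 - (x + u) - (1 - x) = - u) in t1; last by ring.
rewrite /od_term_deriv; lra.
Qed.

Lemma od_term_deriv_inj c x y : 0 < x -> 0 < y -> x + y < 1 ->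
  od_term_deriv c x = od_term_deriv c y -> x = y.
Proof.
move=> x0 y0 xy1; rewrite /od_term_deriv => e.
have x1 : 0 < 1 - x by lra.
have y1 : 0 < 1 - y by lra.
have : x * (1 - x) = y * (1 - y).
  by apply: ln_inj; rewrite ?posrE ?mulr_gt0 // !lnM ?posrE //; lra.
nra.
Qed.

End ODTerms.

Section Simplex.
Context {R : realType} {n : nat}.
Implicit Types (q p : 'I_n -> R) (t : R).

Definition vertex (j : 'I_n) : 'I_n -> R := fun i => if i == j then 1 else 0.

Lemma Sim_vertex j : Sim (vertex j).
Proof.
split=> [i | ]; first by rewrite /vertex; case: eqP.
by rewrite (bigD1 j) //= /vertex eqxx big1 ?addr0 // => i /negbTE ->.
Qed.

Lemma OD_vertex p j : 0 < p j -> OD (vertex j) p = ln (p j).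
Proof.
move=> pj; rewrite ODE (bigD1 j) //= big1 => [|i /negbTE ij]; last first.
  by rewrite /vertex ij od_term0.
by rewrite /vertex eqxx /od_term subrr mul0r mul1r ln_div ?posrE // ln1; ring.
Qed.

Lemma Sim_eq_vertex q j : Sim q -> q j = 1 -> q = vertex j.
Proof.
move=> [q0 q1] qj; have others : \sum_(i | i != j) q i = 0.
  by move: q1; rewrite (bigD1 j) //= qj -[RHS]addr0 => /addrI.
apply/funext => i; rewrite /vertex; case: eqP => [-> // | /eqP ij].
exact: (psumr_eq0P (fun i _ => q0 i) others ij).
Qed.

Lemma Sim_le1 q i : Sim q -> q i <= 1.
Proof. by move=> [q0 <-]; apply: (ler_sum_term (P := xpredT)). Qed.

Lemma Sim_eq_uniform q : Sim q -> (forall i k, q i = q k) -> q = fun=> n%:R^-1.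
Proof.
move=> [_ q1] qc; apply/funext => i.
have N0 : n%:R != 0 :> R by rewrite pnatr_eq0 -lt0n (leq_ltn_trans (leq0n i)).
have qN : q i * n%:R = 1.
  by rewrite -[RHS]q1 (eq_bigr (fun=> q i)) ?sumr_const ?card_ord ?mulr_natr // => k _.
by apply: (mulIf N0); rewrite qN mulVf.
Qed.

Definition transfer q (i m : 'I_n) t : 'I_n -> R :=
  fun k => q k + (if k == i then t else 0) - (if k == m then t else 0).

Section Transfer.
Variables (q : 'I_n -> R) (i m : 'I_n) (t : R).
Hypothesis im : i != m.

Lemma transfer_to : transfer q i m t i = q i + t.
Proof. by rewrite /transfer eqxx (negbTE im) subr0. Qed.

Lemma transfer_from : transfer q i m t m = q m - t.
Proof. by rewrite /transfer eqxx eq_sym (negbTE im) addr0. Qed.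

Lemma transfer_other k : k != i -> k != m -> transfer q i m t k = q k.
Proof. by move=> /negbTE ki /negbTE km; rewrite /transfer ki km addr0 subr0. Qed.

Lemma Sim_transfer : Sim q -> 0 <= q i + t -> 0 <= q m - t -> Sim (transfer q i m t).
Proof.
move=> [q0 q1] qit qmt; split=> [k | ].
  have [-> | ki] := eqVneq k i; first by rewrite transfer_to.
  have [-> | km] := eqVneq k m; first by rewrite transfer_from.
  by rewrite transfer_other.
rewrite /transfer sumrB big_split /= q1.
rewrite (bigD1 i) //= eqxx big1 ?addr0; last by move=> k /negbTE ->.
rewrite (bigD1 m) //= eqxx big1 ?addr0; last by move=> k /negbTE ->.
ring.
Qed.

Lemma OD_transfer p : OD (transfer q i m t) p - OD q p =
  (od_term (p i) (q i + t) - od_term (p i) (q i))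
  + (od_term (p m) (q m - t) - od_term (p m) (q m)).
Proof.
rewrite !ODE -sumrB (bigD1 i) //= (bigD1 m) 1?eq_sym //=.
rewrite transfer_to transfer_from big1 ?addr0 // => k /andP [ki km].
by rewrite transfer_other // subrr.
Qed.

End Transfer.
End Simplex.

Section Dominance.
Context {R : realType} {n : nat} (p : 'I_n -> R).
Hypothesis p_gt0 : forall i, 0 < p i.
Variable j : 'I_n.
Local Notation P := (\sum_(i < n | i != j) p i).

Lemma p_le_sum_other i : i != j -> p i <= P.
Proof. by move=> ij; apply: ler_sum_term => // k _; apply: ltW. Qed.

Lemma sum_other_gt0 : (1 < n)%N -> 0 < P.
Proof.
move=> n1; have [k] : exists k, k \notin [:: j] by apply: exists_notin; rewrite card_ord.
by rewrite inE => /p_le_sum_other; apply: lt_le_trans.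
Qed.

Lemma OD_le_ln_dominant q : (1 < n)%N -> dominant p j -> Sim q -> OD q p <= ln (p j).
Proof.
move=> n1 dom [q0 q1]; have P0 := sum_other_gt0 n1.
set s := \sum_(i < n | i != j) q i.
have qj : q j = 1 - s by rewrite -q1 (bigD1 j) //= -/s; ring.
have s0 : 0 <= s by rewrite sumr_ge0.
have s1 : s <= 1 by rewrite -q1 (bigD1 j) //= -/s lerDr.
have logsum := log_sum_ineq (P := fun i => i != j) (fun i _ => q0 i) (fun i _ => p_gt0 i) P0.
have convex := sum_mul_ln1B_le (P := fun i => i != j) (fun i _ => q0 i) s1.
rewrite -/s in logsum convex.
rewrite ODE (bigD1 j) //= /od_term qj (_ : 1 - (1 - s) = s); last by ring.
rewrite big_split /= sumrN -/s.
have := mul_lnE _ _ s0 P0; have := mul_lnE _ _ (ltac:(lra) : 0 <= 1 - s) (p_gt0 j).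
have lnP : ln P <= ln (p j) by rewrite ler_ln ?posrE.
have := ler_wpM2l s0 lnP.
lra.
Qed.

Definition mix t : 'I_n -> R := fun i => if i == j then 1 - t else t * p i / P.

Section Mix.
Variable t : R.
Hypotheses (P0 : 0 < P) (t0 : 0 <= t).

Lemma mix_other i : i != j -> mix t i = t * p i / P.
Proof. by rewrite /mix => /negbTE ->. Qed.

Lemma mix_other_bounds i : i != j -> 0 <= mix t i <= t.
Proof.
move=> ij; rewrite mix_other // -mulrA; apply/andP; split.
  by rewrite mulr_ge0 // divr_ge0 // ltW.
by apply: ler_piMr => //; rewrite ler_pdivrMr // mul1r p_le_sum_other.
Qed.

Lemma sum_mix_other : \sum_(i | i != j) mix t i = t.
Proof.
rewrite (eq_bigr (fun i => t / P * p i)) => [|i ij]; last first.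
  by rewrite mix_other //; field; rewrite gt_eqF.
by rewrite -mulr_sumr; field; rewrite gt_eqF.
Qed.

Lemma Sim_mix : t <= 1 -> Sim (mix t).
Proof.
move=> t1; split=> [i | ]; last by rewrite (bigD1 j) //= sum_mix_other /mix eqxx subrK.
have [-> | ij] := eqVneq i j; last by case/andP: (mix_other_bounds _ ij).
by rewrite /mix eqxx subr_ge0.
Qed.

Lemma OD_mix_ge : t < 1 -> ln (p j) + t * (ln P - ln (p j) - t) <= OD (mix t) p.
Proof.
move=> t1; rewrite ODE [leRHS](bigD1 j) //= {1}/mix eqxx /od_term.
rewrite (_ : 1 - (1 - t) = t); last by ring.
have others : - t - t * ln (t / P) <=
    \sum_(i | i != j) ((1 - mix t i) * ln (1 - mix t i) - mix t i * ln (mix t i / p i)).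
  have step (i : 'I_n) : i != j -> - mix t i - mix t i * ln (t / P)
      <= (1 - mix t i) * ln (1 - mix t i) - mix t i * ln (mix t i / p i).
    move=> ij; have qi1 : 0 <= 1 - mix t i.
      by case/andP: (mix_other_bounds _ ij) => _ qit; lra.
    have := mul_ln_div_ge _ _ qi1 ltr01; rewrite divr1.
    rewrite (_ : mix t i / p i = t / P); first lra.
    by rewrite mix_other //; field; rewrite !gt_eqF.
  apply: le_trans (ler_sum _ step).
  by rewrite big_split /= !sumrN -mulr_suml sum_mix_other.
have := mul_lnE _ _ t0 P0.
have := mul_lnE _ _ (ltac:(lra) : 0 <= 1 - t) (p_gt0 j).
have := ler_wpM2l (ltac:(lra) : 0 <= 1 - t) (ln_le_subr1 _ (ltac:(lra) : 0 < 1 - t)).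
nra.
Qed.

End Mix.

Lemma exists_OD_gt_ln : ~ dominant p j -> exists q, Sim q /\ ln (p j) < OD q p.
Proof.
move=> /negP; rewrite /dominant -ltNge => pjP.
have P0 : 0 < P := lt_trans (p_gt0 j) pjP.
set L := ln P - ln (p j).
have L0 : 0 < L by rewrite subr_gt0 ltr_ln ?posrE.
set t := Num.min 2^-1 (L / 2).
have t0 : 0 < t by rewrite lt_min invr_gt0 ltr0n divr_gt0.
have t1 : t < 1 by apply: le_lt_trans (_ : 2^-1 < 1); rewrite ?ge_min ?lexx //; lra.
have tL : t < L by apply: le_lt_trans (_ : L / 2 < L); rewrite ?ge_min ?lexx ?orbT //; lra.
exists (mix t); split; first exact: Sim_mix t P0 (ltW t0) (ltW t1).
apply: lt_le_trans (OD_mix_ge t P0 (ltW t0) t1).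
by rewrite ltrDl mulr_gt0 // subr_gt0.
Qed.

Lemma is_max_value_ln_iff_dominant :
  (1 < n)%N -> is_max_value p (ln (p j)) <-> dominant p j.
Proof.
move=> n1; split=> [[_ bound] | dom].
  have [// | /exists_OD_gt_ln [q [Sq gt]]] := pselect (dominant p j).
  by move: (bound q Sq); rewrite leNgt gt.
split; first by exists (vertex j); split; [exact: Sim_vertex | exact: OD_vertex].
by move=> q; apply: OD_le_ln_dominant.
Qed.

End Dominance.

Lemma dominant_unique {R : realType} {n : nat} (p : 'I_n -> R) :
  (forall i, 0 < p i) -> (2 < n)%N ->
  forall j k, dominant p j -> dominant p k -> j = k.
Proof.
move=> p_gt0 n3 j k dj dk; apply/eqP; apply: contraT => jk.
have [m] : exists m, m \notin [:: j; k] by apply: exists_notin; rewrite card_ord.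
rewrite !inE negb_or => /andP[mj mk].
have pair (l l' : 'I_n) : l != l' -> m != l -> m != l' ->
    p l + p m <= \sum_(i < n | i != l') p i.
  move=> ll' ml ml'; rewrite (bigD1 l) //= (bigD1 m) /=; last by rewrite ml ml'.
  by rewrite addrA lerDl sumr_ge0 // => i _; apply: ltW.
suff : p m <= 0 by rewrite leNgt p_gt0.
have := pair k j (ltac:(by rewrite eq_sym)) mk mj; have := pair j k jk mj mk.
move: dj dk; rewrite /dominant; lra.
Qed.

Section Maximizer.
Context {R : realType} {n : nat} (p q : 'I_n -> R).
Hypotheses (p_gt0 : forall i, 0 < p i) (maxq : is_maximizer p q).

Lemma maximizer_transfer_le0 {i m : 'I_n} t : i != m -> 0 <= q i + t -> 0 <= q m - t ->
  (od_term (p i) (q i + t) - od_term (p i) (q i))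
  + (od_term (p m) (q m - t) - od_term (p m) (q m)) <= 0.
Proof.
move=> im qit qmt; have [Sq qmax] := maxq.
by rewrite -OD_transfer // subr_le0; apply/qmax/Sim_transfer.
Qed.

(* od_term has slope +oo at 0, so moving a small mass [t] onto a null
   coordinate gains about [- t ln t]. *)
Lemma maximizer_coord_neq0 k i : 0 < q i -> q i < 1 -> q k != 0.
Proof.
move=> qi0 qi1; apply/eqP => qk.
have ki : k != i by apply/eqP => ki; move: qi0; rewrite -ki qk ltxx.
set x := q i in qi0 qi1 *.
set K := ln (p k) - 1 - od_term_deriv (p i) x.
set t := Num.min x (expR (K - 2)).
have t0 : 0 < t by rewrite lt_min qi0 expR_gt0.
have tx : t <= x by rewrite ge_min lexx.
have lnt : ln t <= K - 2.
  by rewrite -(expRK (K - 2)) ler_ln ?posrE ?expR_gt0 // ge_min lexx orbT.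
have := maximizer_transfer_le0 t ki (ltac:(rewrite qk; lra)) (ltac:(rewrite -/x; lra)).
rewrite qk add0r od_term0 subr0 -/x.
have := od_term_ge_at0 _ _ (p_gt0 k) (ltW t0) (ltac:(lra)).
have := od_term_incr_ge _ _ (- t) (p_gt0 i) qi0 qi1 (ltac:(lra)) (ltac:(lra)).
have tx1 : t / x <= 1 by rewrite ler_pdivrMr // mul1r.
rewrite sqrrN expr2 -mulrA.
have := ler_wpM2l (ltW t0) lnt; have := ler_wpM2l (ltW t0) tx1.
rewrite /K; nra.
Qed.

Lemma maximizer_deriv_le i m : i != m -> 0 < q i -> q i < 1 -> 0 < q m -> q m < 1 ->
  od_term_deriv (p i) (q i) <= od_term_deriv (p m) (q m).
Proof.
move=> im xi0 xi1 ym0 ym1.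
set x := q i in xi0 xi1 *; set y := q m in ym0 ym1 *.
rewrite leNgt; apply/negP => D0.
set D := od_term_deriv (p i) x - od_term_deriv (p m) y.
have Dp : 0 < D by rewrite subr_gt0.
set C := x^-1 + y^-1.
have Cp : 0 < C by rewrite addr_gt0 ?invr_gt0.
set u := Num.min (Num.min y (1 - x)) (D / (2 * C)).
have u0 : 0 < u by rewrite !lt_min ym0 subr_gt0 xi1 divr_gt0 // mulr_gt0.
have uy : u <= y by rewrite !ge_min lexx.
have ux : u <= 1 - x by rewrite !ge_min lexx orbT.
have uC : u * C <= D / 2.
  have : u <= D / (2 * C) by rewrite ge_min lexx orbT.
  by rewrite ler_pdivlMr ?mulr_gt0 //; lra.
have := maximizer_transfer_le0 u im (ltac:(rewrite -/x; lra)) (ltac:(rewrite -/y; lra)).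
rewrite -/x -/y.
have := od_term_incr_ge _ _ u (p_gt0 i) xi0 xi1 (ltac:(lra)) (ltac:(lra) : x + u <= 1).
have := od_term_incr_ge _ _ (- u) (p_gt0 m) ym0 ym1 (ltac:(lra)) (ltac:(lra)).
rewrite sqrrN.
have -> : u ^+ 2 / y = u * (u * C) - u ^+ 2 / x by rewrite /C; field; rewrite !gt_eqF.
have := ler_wpM2l (ltW u0) uC.
rewrite /D in Dp uC *; nra.
Qed.

Lemma maximizer_gt0 : (forall j, ~ dominant p j) -> forall i, 0 < q i.
Proof.
move=> ndom i; have [Sq qmax] := maxq; have [q0 q1] := Sq.
rewrite lt_def q0 andbT; apply/negP => /eqP qi.
have [[j qj] | no1] := pselect (exists j, q j = 1).
  have [q' [Sq' gt]] := exists_OD_gt_ln _ p_gt0 _ (ndom j).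
  by move: (qmax q' Sq'); rewrite (Sim_eq_vertex _ _ Sq qj) OD_vertex // leNgt gt.
have [k /andP[_ qk0]] : exists k, true && (0 < q k).
  by apply: psumr_neq0P => [k _ | ]; [apply: q0 | rewrite q1; apply/eqP; exact: oner_neq0].
have qk1 : q k < 1.
  by rewrite lt_neqAle Sim_le1 // andbT; apply/eqP => qk1; apply: no1; exists k.
by move: (maximizer_coord_neq0 i k qk0 qk1); rewrite qi eqxx.
Qed.

End Maximizer.

Section Existence.
Context {R : realType}.
Import numFieldNormedType.Exports.
Local Open Scope classical_set_scope.

Lemma mul_ln_ge_sqrt (z : R) : 0 < z -> - (2 * Num.sqrt z) <= z * ln z.
Proof.
move=> z0; set s := Num.sqrt z; have s0 : 0 < s by rewrite sqrtr_gt0.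
have ss : z = s * s by rewrite -expr2 sqr_sqrtr // ltW.
have := ler_wpM2l (ltW z0) (ln_ge_1subV _ s0).
rewrite {2 4}ss lnM ?posrE // (_ : z * (1 - s^-1) = z - s); last first.
  by rewrite ss; field; rewrite gt_eqF.
nra.
Qed.

Lemma continuous_mul_ln : continuous (fun y : R => y * ln y).
Proof.
move=> y; have [y0 | ] := ltP 0 y; first exact: continuousM cvg_id (continuous_ln y0).
rewrite le_eqVlt => /predU1P[-> | yn]; apply/cvgrPdist_lt => e e0; last first.
  apply/nbhs_ballP; exists (- y); first by rewrite /= oppr_gt0.
  move=> z; rewrite /ball /= ltr_norml => /andP [zy _].
  have zn : z <= 0 by lra.
  by rewrite (ln0 zn) (ln0 (ltW yn)) !mulr0 subr0 normr0.
have d0 : 0 < Num.min 1 ((e / 2) ^+ 2) by rewrite lt_min ltr01 exprn_gt0 // divr_gt0.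
apply/nbhs_ballP; exists (Num.min 1 ((e / 2) ^+ 2)) => // z.
rewrite /ball /= sub0r normrN lt_min mul0r => /andP [z1 ze].
have [z0 | zn] := ltP 0 z; last by rewrite ln0 // mulr0 subr0 normr0.
move: z1 ze; rewrite gtr0_norm // => z1 ze.
have lnz : z * ln z < 0 by rewrite pmulr_rlt0 // ln_lt0 // z0 z1.
rewrite sub0r normrN ltr0_norm //.
have se : Num.sqrt z < e / 2.
  by rewrite -(ltr_pXn2r (n := 2)) ?nnegrE ?sqrtr_ge0 ?sqr_sqrtr ?ltW ?divr_gt0.
have := mul_ln_ge_sqrt _ z0; lra.
Qed.

Lemma continuous_od_term (c : R) : 0 < c -> continuous (od_term c).
Proof.
move=> c0 x; pose f y : R := y * ln y.
have -> : od_term c = fun z => f (1 - z) - c * f (z / c).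
  by apply/funext => z; rewrite /od_term /f; congr (_ - _); field; rewrite gt_eqF.
have c1 : {for x, continuous (fun z : R => 1 - z)}.
  exact: continuousB (cvg_cst (1 : R)) cvg_id.
have cc : {for x, continuous (fun z : R => z / c)}.
  exact: continuousM cvg_id (cvg_cst (c^-1 : R)).
have cA : {for x, continuous (fun z : R => f (1 - z))}.
  exact: continuous_comp c1 (continuous_mul_ln _).
have cB : {for x, continuous (fun z : R => c * f (z / c))}.
  exact: continuousM (cvg_cst c) (continuous_comp cc (continuous_mul_ln _)).
exact: continuousB cA cB.
Qed.

Lemma continuous_OD {n : nat} (p : 'I_n -> R) : (forall i, 0 < p i) ->
  continuous (fun v : 'rV[R]_n => OD (fun i => v ord0 i) p).
Proof.
move=> p_gt0; under eq_fun do rewrite ODE.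
apply: (@continuous_big _ _ +%R 0 xpredT add_continuous) => i _ v.
by apply: continuous_comp; [exact: coord_continuous | exact: continuous_od_term].
Qed.

Lemma compact_simplex n : compact [set v : 'rV[R]_n | Sim (fun i => v ord0 i)].
Proof.
have cube : compact [set v : 'rV[R]_n | forall i, `[(0 : R), 1]%classic (v ord0 i)].
  exact: rV_compact (fun=> @segment_compact R 0 1).
apply: (subclosed_compact _ cube) => [|v [v0 v1] i /=]; last first.
  by rewrite in_itv /= v0 -v1; apply: (ler_sum_term (P := xpredT)).
have -> : [set v : 'rV[R]_n | Sim (fun i => v ord0 i)]
    = \bigcap_(i in setT) [set v | 0 <= v ord0 i] `&` [set v | \sum_(i < n) v ord0 i = 1].
  by apply/seteqP; split => v /= [v0 v1]; split => // i *; apply: v0.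
apply: closedI.
  apply: closed_bigI => i _.
  apply: (@preimage_closed _ _ (fun v : 'rV[R]_n => v ord0 i) [set x | 0 <= x]).
    by move=> v _; exact: coord_continuous.
  exact: closed_ge.
apply: (@preimage_closed _ _ (fun v : 'rV[R]_n => \sum_(i < n) v ord0 i) [set x | x = 1]).
  move=> v _; apply: (@continuous_big _ _ +%R 0 xpredT add_continuous) => i _ w.
  exact: coord_continuous.
exact: closed_eq.
Qed.

Lemma exists_maximizer {n : nat} (p : 'I_n -> R) : (0 < n)%N -> (forall i, 0 < p i) ->
  exists q, is_maximizer p q.
Proof.
move=> n0 p_gt0.
have rowK (q : 'I_n -> R) : (fun i => (\row_k q k) ord0 i) = q.
  by apply/funext => i; rewrite mxE.
have [|v Sv vmax] := EVT_max_rV _ (compact_simplex n)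
  (continuous_subspaceT (continuous_OD _ p_gt0)).
  by exists (\row_k vertex (Ordinal n0) k); rewrite /= rowK; exact: Sim_vertex.
exists (fun i => v ord0 i); split; first by move: Sv; rewrite inE.
by move=> q Sq; have := vmax (\row_k q k); rewrite inE /= !rowK; apply.
Qed.

End Existence.

Section Uniform.
Context {R : realType} {n : nat} (p : 'I_n -> R) (c : R).
Hypothesis p_const : forall i, p i = c.

Lemma sum_other_const j : \sum_(i < n | i != j) p i = c * (n%:R - 1).
Proof.
have : \sum_(i < n) p i = c * n%:R.
  by rewrite (eq_bigr (fun=> c)) // sumr_const card_ord mulr_natr.
by rewrite (bigD1 j) //= p_const mulrBr mulr1; lra.
Qed.

Lemma OD_uniform : 0 < c -> (0 < n)%N ->
  OD (fun=> n%:R^-1) p = (n%:R - 1) * ln (1 - n%:R^-1) + ln n%:R + ln c.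
Proof.
move=> c_gt0 n0; have N0 : 0 < n%:R :> R by rewrite ltr0n.
rewrite ODE (eq_bigr (fun=> od_term c n%:R^-1)) => [|i _]; last by rewrite p_const.
rewrite sumr_const card_ord /od_term; set N := n%:R.
rewrite -mulr_natr -/N ln_div ?posrE ?invr_gt0 // lnV ?posrE //.
by field; rewrite gt_eqF.
Qed.

Lemma nondominant_const j : 0 < c -> (2 < n)%N -> ~ dominant p j.
Proof.
move=> c_gt0 n3; rewrite /dominant sum_other_const p_const; apply/negP; rewrite -ltNge.
have : 3%:R <= n%:R :> R by rewrite ler_nat.
move/(ler_wpM2l (ltW c_gt0)); rewrite mulrBr mulr1; lra.
Qed.

Lemma maximizer_eq_uniform q : 0 < c -> (2 < n)%N -> is_maximizer p q ->
  q = fun=> n%:R^-1.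
Proof.
move=> c_gt0 n3 maxq; have p_gt0 i : 0 < p i by rewrite p_const.
have q_gt0 := maximizer_gt0 _ _ p_gt0 maxq (fun j => nondominant_const j c_gt0 n3).
have [[q0 q1] _] := maxq.
have pair_lt1 i m : i != m -> q i + q m < 1.
  move=> im; have [l] : exists l, l \notin [:: i; m] by apply: exists_notin; rewrite card_ord.
  rewrite !inE negb_or => /andP[li lm].
  rewrite -q1 (bigD1 i) //= (bigD1 m) 1?eq_sym //= (bigD1 l) /=; last by rewrite li lm.
  by rewrite addrA ltrDl (lt_le_trans (q_gt0 l)) // lerDl sumr_ge0.
have q_lt1 i : q i < 1.
  have [m] : exists m, m \notin [:: i] by apply: exists_notin; rewrite card_ord (ltn_trans _ n3).
  by rewrite inE eq_sym => /pair_lt1; have := q_gt0 m; lra.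
apply: Sim_eq_uniform => [|i m]; first by case: maxq.
have [-> // | im] := eqVneq i m.
apply: (od_term_deriv_inj c); rewrite ?q_gt0 ?pair_lt1 //.
have := maximizer_deriv_le _ _ p_gt0 maxq i m im (q_gt0 i) (q_lt1 i) (q_gt0 m) (q_lt1 m).
have := maximizer_deriv_le _ _ p_gt0 maxq m i (ltac:(by rewrite eq_sym)) (q_gt0 m) (q_lt1 m)
  (q_gt0 i) (q_lt1 i).
by rewrite !p_const => d1 d2; apply/eqP; rewrite eq_le d1 d2.
Qed.

Lemma uniform_is_maximizer : 0 < c -> (1 < n)%N -> is_maximizer p (fun=> n%:R^-1).
Proof.
move=> c_gt0; have p_gt0 i : 0 < p i by rewrite p_const.
rewrite leq_eqVlt => /predU1P[n2 | n3]; last first.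
  have [q maxq] := exists_maximizer p (ltnW (ltnW n3)) p_gt0.
  by rewrite -(maximizer_eq_uniform _ c_gt0 n3 maxq).
have n0 : (0 < n)%N by rewrite -n2.
have N2 : n%:R = 2 :> R by rewrite -n2.
split=> [|q Sq].
  split=> [i | ]; first by rewrite N2 invr_ge0.
  by rewrite sumr_const card_ord -n2 mulr2n; field.
have dom : dominant p (Ordinal n0).
  by rewrite /dominant sum_other_const p_const N2; lra.
rewrite OD_uniform // N2 (_ : 1 - 2^-1 = 2^-1 :> R); last by field.
have := OD_le_ln_dominant _ p_gt0 _ _ (ltac:(by rewrite -n2)) dom Sq.
by rewrite p_const lnV ?posrE //; lra.
Qed.

End Uniform.

Theorem fact5p8 (R : realType) (n : nat) (hn : (2 <= n)%N)
  (p : 'I_n -> R) (hp : forall i, 0 < p i) :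
  [/\ (forall j : 'I_n, is_max_value p (ln (p j)) <-> dominant p j),
      ((3 <= n)%N -> forall j k : 'I_n, dominant p j -> dominant p k -> j = k),
      ((forall j : 'I_n, ~ dominant p j) ->
         (exists q, is_maximizer p q /\ forall i, 0 < q i) /\
         (forall q, is_maximizer p q -> forall i, 0 < q i))
    & (forall c : R, 0 < c -> (forall i, p i = c) ->
         is_maximizer p (fun _ => n%:R^-1) /\
         OD (fun _ => n%:R^-1) p
           = (n%:R - 1) * ln (1 - n%:R^-1) + ln n%:R + ln c)].
Proof.
split.
- by move=> j; apply: is_max_value_ln_iff_dominant.
- exact: dominant_unique.
- move=> ndom; split=> [|q maxq]; last exact: maximizer_gt0.
  have [q maxq] := exists_maximizer p (ltnW hn) hp.
  by exists q; split=> //; apply: maximizer_gt0.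
- move=> c c0 pc; split; first exact: uniform_is_maximizer.
  by apply: OD_uniform => //; apply: ltnW.
Qed.
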